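(* Let $G=(V,E,w)$ be a weighted graph with graph distance $d_G$, let $\mathcal{U}\subseteq V$ be a patch with injective coordinate map $\phi\colon\mathcal{U}\to\mathbb{R}^q$, let $v_0\in\mathcal{U}$, $\gamma\ge 0$ and $C>0$, and let $f\colon V\to\mathbb{R}$ satisfy $f\in C^\gamma_G(C,v_0)$ (defined below). Let $\tau\subseteq\mathcal{U}$ be a cluster with $v_0\in\tau$, and let $\psi_{j,k}$ be a samplet associated with $\tau$, i.e. $\psi_{j,k}=\sum_{\ell=1}^{|\tau|}\omega_{j,k}^{(\ell)}\delta_{\phi(v_\ell)}$, where $\tau=\{v_1,\dots,v_{|\tau|}\}$, with real weights satisfying $\sum_{\ell=1}^{|\tau|}(\omega_{j,k}^{(\ell)})^2=1$ and having vanishing moments up to order $\lfloor\gamma\rfloor$, i.e. $\sum_{\ell=1}^{|\tau|}\omega_{j,k}^{(\ell)}\,\phi(v_\ell)^{\boldsymbol\alpha}=0$ for every multi-index $\boldsymbol\alpha\in\mathbb{N}_0^q$ with $|\boldsymbol\alpha|\le\lfloor\gamma\rfloor$. Then \[ |\langle \psi_{j,k},f\circ\phi^{-1}\rangle|\le C \max_{v\in\mathcal{U}} d_G(v,v_0)^\gamma \sqrt{|\tau|}, \] where $\langle \psi_{j,k},g\rangle:=\sum_{\ell=1}^{|\tau|}\omega_{j,k}^{(\ell)}g(\phi(v_\ell))$.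
   Context: $G=(V,E,w)$ is a weighted graph with finite vertex set $V$, edge set $E$ and nonnegative edge weights $w$; $d_G$ denotes the graph (shortest weighted path) distance. The vertex set is partitioned into patches, each patch $\mathcal{U}$ being equipped with a unique chart, i.e. an injective coordinate map $\phi\colon\mathcal{U}\to\mathbb{R}^q$. For $\mathbf{x}\in\mathbb{R}^q$ and a multi-index $\boldsymbol\beta$, $\mathbf{x}^{\boldsymbol\beta}=\prod_i x_i^{\beta_i}$. Definition of the class: for $v_0\in\mathcal{U}$ (with $(\mathcal{U},\phi)$ the chart containing $v_0$), $\gamma\ge0$, $C>0$, a function $f\colon V\to\mathbb{R}$ belongs to $C^\gamma_G(C,v_0)$ if there exist real coefficients $(c_{\boldsymbol\beta})_{|\boldsymbol\beta|\le\lfloor\gamma\rfloor}$ with $\sum_{|\boldsymbol\beta|=\lfloor\gamma\rfloor}|c_{\boldsymbol\beta}|\neq 0$ such that \[ \Big|f(v)-\sum_{|\boldsymbol\beta|\le\lfloor\gamma\rfloor}c_{\boldsymbol\beta}\big(\phi(v)-\phi(v_0)\big)^{\boldsymbol\beta}\Big|\le C\, d_G(v,v_0)^\gamma\quad\text{for every } v\in\mathcal{U}. \] A cluster is a subset of the patch $\mathcal{U}$ (a node of a hierarchical cluster tree on $\phi(\mathcal{U})$); $\delta_{\mathbf{z}}$ denotes the Dirac measure at $\mathbf{z}\in\mathbb{R}^q$. *)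

From HB Require Import structures.
From mathcomp Require Import all_boot all_order all_algebra.
From mathcomp Require Import all_classical all_reals all_analysis.
Set Implicit Arguments. Unset Strict Implicit. Unset Printing Implicit Defensive.
Import Order.TTheory GRing.Theory Num.Theory.
Local Open Scope ring_scope.

(* Weighted graph G = (V, E, w): finite vertex set V, edge relation E,
   weights w (nonnegativity is a hypothesis of the theorem). *)

Definition walk_length (R : realType) (V : finType) (w : V -> V -> R)
  (u : V) (p : seq V) : R := \sum_(x <- pairmap w u p) x.

(* graph (shortest weighted path) distance, +oo if no path exists *)
Definition graph_dist (R : realType) (V : finType) (E : rel V) (w : V -> V -> R)
  (u v : V) : \bar R :=
  ereal_inf [set (walk_length w u p)%:E | p in [set p : seq V | path E u p /\ last u p = v]].

(* multi-indices beta in N_0^q with entries <= m (those with |beta| <= m are all of this form) *)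
Definition mindex (q m : nat) := {ffun 'I_q -> 'I_m.+1}.
Definition mabs (q m : nat) (b : mindex q m) : nat := \sum_(i < q) (b i : nat).

Definition mono (R : realType) (q m : nat) (x : 'rV[R]_q) (b : mindex q m) : R :=
  \prod_(i < q) x ord0 i ^+ (b i).

Definition Cgamma (R : realType) (V : finType) (E : rel V) (w : V -> V -> R)
  (q : nat) (U : {set V}) (phi : V -> 'rV[R]_q) (gamma C : R) (v0 : V)
  (f : V -> R) : Prop :=
  let m := Num.truncn gamma in
  exists c : mindex q m -> R,
    (\sum_(b : mindex q m | (mabs b == m)%N) `|c b| != 0) /\
    forall v, v \in U ->
      ((`|f v - \sum_(b : mindex q m | (mabs b <= m)%N) c b * mono (phi v - phi v0) b|)%:E
        <= C%:E * poweR (graph_dist E w v v0) gamma)%E.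

From HB Require Import structures.
From mathcomp Require Import all_boot all_order all_algebra.
From mathcomp Require Import all_classical all_reals all_analysis.
From mathcomp Require Import ring zify.
Import Order.TTheory GRing.Theory Num.Theory.
Local Open Scope ring_scope.

(* Writing P for the Taylor polynomial of f at v0, each P (phi v) is a
   polynomial of degree at most floor(gamma) in the coordinates of phi v, so
   the vanishing moments of the samplet annihilate it.  Hence
   <psi, f o phi^-1> = sum_v omega v (f v - P v), where every
   |f v - P v| <= C d_G(v, v0)^gamma, and the l1-l2 Cauchy-Schwarz bound
   sum_v |omega v| <= sqrt(|tau|) (sum_v omega v^2)^(1/2) = sqrt(|tau|)
   concludes. *)

Section SumNormSqrt.
Variables (R : rcfType) (I : finType) (A : {pred I}) (x : I -> R).

Lemma sqr_sum_norm_le :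
  (\sum_(i in A) `|x i|) ^+ 2 <= #|A|%:R * \sum_(i in A) x i ^+ 2.
Proof.
have sqr_norm i : `|x i| ^+ 2 = x i ^+ 2 by rewrite real_normK ?num_real.
have sum_sqr : \sum_(i in A) \sum_(j in A) (x i ^+ 2 + x j ^+ 2)
    = (#|A|%:R * \sum_(i in A) x i ^+ 2) *+ 2.
  rewrite (eq_bigr (fun i => x i ^+ 2 *+ #|A| + \sum_(j in A) x j ^+ 2)).
    by rewrite big_split /= sumr_const sumrMnl mulr_natl mulr2n.
  by move=> i _; rewrite big_split /= sumr_const.
have sum_prod : \sum_(i in A) \sum_(j in A) `|x i| * `|x j|
    = (\sum_(i in A) `|x i|) ^+ 2.
  by rewrite expr2 mulr_suml; under [RHS]eq_bigr do rewrite mulr_sumr.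
have : 0 <= \sum_(i in A) \sum_(j in A) (`|x i| - `|x j|) ^+ 2.
  by do 2![apply: sumr_ge0 => ? _]; exact: sqr_ge0.
have -> : \sum_(i in A) \sum_(j in A) (`|x i| - `|x j|) ^+ 2
    = \sum_(i in A) \sum_(j in A) (x i ^+ 2 + x j ^+ 2)
      - (\sum_(i in A) \sum_(j in A) `|x i| * `|x j|) *+ 2.
  rewrite -sumrMnl -sumrB; apply: eq_bigr => i _.
  rewrite -sumrMnl -sumrB; apply: eq_bigr => j _.
  by rewrite sqrrB !sqr_norm; ring.
by rewrite sum_sqr sum_prod -mulrnBl pmulrn_lge0 // subr_ge0.
Qed.

Lemma sum_norm_le_sqrt :
  \sum_(i in A) `|x i| <= Num.sqrt (#|A|%:R * \sum_(i in A) x i ^+ 2).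
Proof.
rewrite -(ger0_norm (sumr_ge0 _ (fun i _ => normr_ge0 (x i)))) -sqrtr_sqr.
exact/ler_wsqrtr/sqr_sum_norm_le.
Qed.
End SumNormSqrt.

Lemma norm_weighted_sum_le (R : rcfType) (I : finType) (A : {pred I})
    (omega h : I -> R) (B : R) :
  0 <= B -> (forall i, i \in A -> `|h i| <= B) ->
  `|\sum_(i in A) omega i * h i|
    <= B * Num.sqrt (#|A|%:R * \sum_(i in A) omega i ^+ 2).
Proof.
move=> B_ge0 h_le; apply: le_trans (ler_norm_sum _ _ _) _.
apply: le_trans (_ : \sum_(i in A) `|omega i| * B <= _).
  by apply: ler_sum => i Ai; rewrite normrM ler_wpM2l ?h_le.
by rewrite -mulr_suml mulrC ler_wpM2l // sum_norm_le_sqrt.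
Qed.

Section VanishingMoments.
Variables (R : realType) (V : finType) (tau : {set V}) (omega : V -> R).
Variables (q m : nat) (phi : V -> 'rV[R]_q).
Hypothesis moments_eq0 : forall alpha : mindex q m, (mabs alpha <= m)%N ->
  \sum_(v in tau) omega v * mono (phi v) alpha = 0.

Lemma moment_prod_poly_eq0 (p : 'I_q -> {poly R}) :
  (\sum_i (size (p i)).-1 <= m)%N ->
  \sum_(v in tau) omega v * \prod_i (p i).[phi v ord0 i] = 0.
Proof.
move=> deg_p.
(* Expanding each p i up to degree m turns the product into a combination of
   monomials indexed by mindex q m, and a monomial of total degree > m has a
   coefficient beyond the degree of some p i. *)
have size_p i : (size (p i) <= m.+1)%N.
  apply: leq_trans (leqSpred _) _; rewrite ltnS.
  by apply: leq_trans deg_p; rewrite (bigD1 i) //= leq_addr.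
have expand v : \prod_i (p i).[phi v ord0 i]
    = \sum_(b : mindex q m) (\prod_i (p i)`_(b i)) * mono (phi v) b.
  rewrite (eq_bigr _ (fun i _ => horner_coef_wide (phi v ord0 i) (size_p i))).
  rewrite bigA_distr_bigA /=; apply: eq_bigr => b _.
  by rewrite -big_split.
under eq_bigr do rewrite expand mulr_sumr.
rewrite exchange_big /=; apply: big1 => b _.
under eq_bigr do rewrite mulrCA.
rewrite -mulr_sumr.
have [small_b | big_b] := leqP (mabs b) m; first by rewrite moments_eq0 ?mulr0.
have [i coef_eq0] : exists i, (size (p i) <= b i)%N.
  apply/existsP; apply: contraTT big_b.
  rewrite negb_exists -leqNgt => /forallP b_small.
  apply: leq_trans deg_p; apply: leq_sum => i _.
  by move: (b_small i); rewrite -ltnNge; lia.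
suff /eqP -> : \prod_i (p i)`_(b i) == 0 by rewrite mul0r.
by apply/prodf_eq0; exists i => //; rewrite nth_default.
Qed.

Lemma moment_shifted_mono_eq0 (y : 'rV[R]_q) (b : mindex q m) :
  (mabs b <= m)%N -> \sum_(v in tau) omega v * mono (phi v - y) b = 0.
Proof.
move=> small_b.
have deg : (\sum_i (size (('X - (y ord0 i)%:P) ^+ b i)).-1 <= m)%N.
  by under eq_bigr do rewrite size_exp_XsubC.
rewrite -[RHS](moment_prod_poly_eq0 _ deg).
apply: eq_bigr => v _; congr (_ * _).
by apply: eq_bigr => i _; rewrite horner_exp hornerXsubC !mxE.
Qed.

Lemma moment_taylor_eq0 (y : 'rV[R]_q) (c : mindex q m -> R) :
  \sum_(v in tau) omega v *
    \sum_(b : mindex q m | (mabs b <= m)%N) c b * mono (phi v - y) b = 0.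
Proof.
under eq_bigr do rewrite mulr_sumr.
rewrite exchange_big /=; apply: big1 => b small_b.
under eq_bigr do rewrite mulrCA.
by rewrite -mulr_sumr moment_shifted_mono_eq0 ?mulr0.
Qed.

End VanishingMoments.

Theorem proposition4p1 (R : realType) (V : finType) (E : rel V) (w : V -> V -> R)
  (hw : forall u v, 0 <= w u v)
  (q : nat) (U : {set V}) (phi : V -> 'rV[R]_q) (phi_inj : {in U &, injective phi})
  (v0 : V) (gamma C : R) (hgamma : 0 <= gamma) (hC : 0 < C)
  (f : V -> R) (hf : Cgamma E w U phi gamma C v0 f)
  (tau : {set V}) (htauU : tau \subset U) (hv0 : v0 \in tau)
  (omega : V -> R)
  (hnorm : \sum_(v in tau) omega v ^+ 2 = 1)
  (hmom : forall alpha : mindex q (Num.truncn gamma),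
     (mabs alpha <= Num.truncn gamma)%N ->
     \sum_(v in tau) omega v * mono (phi v) alpha = 0)
  (g : 'rV[R]_q -> R) (hg : forall v, v \in U -> g (phi v) = f v) :
  ((`|\sum_(v in tau) omega v * g (phi v)|)%:E
    <= C%:E * (\big[maxe/-oo]_(v in U) poweR (graph_dist E w v v0) gamma)
       * (Num.sqrt (#|tau|%:R))%:E)%E.
Proof.
case: hf => c [_ taylor_err].
set m := Num.truncn gamma in c taylor_err hmom.
set P := fun v =>
  \sum_(b : mindex q m | (mabs b <= m)%N) c b * mono (phi v - phi v0) b.
have tauU v : v \in tau -> v \in U by exact: (fintype.subsetP htauU).
set M := (\big[maxe/-oo]_(v in U) _)%E.
have dist_le_M v : v \in U -> (poweR (graph_dist E w v v0) gamma <= M)%E.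
  by move=> vU; exact: le_bigmax_cond.
have M_ge0 : (0 <= M)%E.
  by apply: le_trans (dist_le_M v0 (tauU _ hv0)); exact: poweR_ge0.
have card_gt0 : (0 < #|tau|)%N by apply/card_gt0P; exists v0.
case: M dist_le_M M_ge0 => [M| |] // dist_le_M M_ge0; last first.
  by rewrite gt0_muley ?lte_fin // gt0_mulye ?lte_fin ?sqrtr_gt0 ?ltr0n ?leey.
rewrite -!EFinM lee_fin.
have -> : \sum_(v in tau) omega v * g (phi v)
    = \sum_(v in tau) omega v * (f v - P v).
  under [RHS]eq_bigr do rewrite mulrBr.
  rewrite sumrB moment_taylor_eq0 // subr0.
  by apply: eq_bigr => v v_tau; rewrite hg ?tauU.
have -> : #|tau|%:R = #|tau|%:R * \sum_(v in tau) omega v ^+ 2 :> R.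
  by rewrite hnorm mulr1.
apply: norm_weighted_sum_le.
  by rewrite mulr_ge0 ?(ltW hC) -?lee_fin.
move=> v v_tau; rewrite -lee_fin EFinM.
apply: le_trans (taylor_err v (tauU _ v_tau)) _.
by rewrite lee_pmul2l ?lte_fin // dist_le_M ?tauU.
Qed.
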